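(* Let $X_0,X_1,\dots,X_q$ be sets with $X_q=A$, let $\mathcal H_i$ be a family of maps $X_{i-1}\to X_i$ ($1\le i\le q$), let $l\colon Y\times A\to[0,M]$, and set $\mathcal H=\mathcal H_q\circ\dots\circ\mathcal H_1$ and $\mathcal G_i=\mathcal H_q\circ\dots\circ\mathcal H_{i+1}$ for $1\le i\le q-1$. For all $\varepsilon_1,\dots,\varepsilon_q>0$, with $\varepsilon=\sum_{i=1}^q\varepsilon_i$, $$\mathcal C(\varepsilon,l_{\mathcal H})\le\mathcal C(\varepsilon_q,l_{\mathcal H_q})\prod_{i=1}^{q-1}\mathcal C_{l_{\mathcal G_i}}(\varepsilon_i,\mathcal H_i).$$
   Context: For a map $h\colon W\to A$, $l_h\colon W\times Y\to[0,M]$ is $l_h(w,y)=l(y,h(w))$, and $l_{\mathcal K}=\{l_k:k\in\mathcal K\}$; so $l_{\mathcal H}$ consists of functions on $X_0\times Y$ and $l_{\mathcal H_q}$ of functions on $X_{q-1}\times Y$. For a class $\mathcal K$ of functions from a set $W$ into $[0,M]$: $\sigma_{\mathcal K}$ the $\sigma$-algebra generated by inverse images of open balls, $\mathcal P_{\mathcal K}$ the probability measures on it, $d_P(k,k')=\int|k-k'|dP$, $\mathcal N(\varepsilon,S,\rho)$ minimal size of an $\varepsilon$-cover, $\mathcal C(\varepsilon,\mathcal K)=\sup_{P\in\mathcal P_{\mathcal K}}\mathcal N(\varepsilon,\mathcal K,d_P)$ ($\infty$ if unbounded). For a structure $U\xrightarrow{\mathcal F}V\xrightarrow{\mathcal G}A$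 and $P\in\mathcal P_{l_{\mathcal G\circ\mathcal F}}$ (measures on $U\times Y$), $d_{[P,l_{\mathcal G}]}(f,f')=\sup_{g\in\mathcal G}\int|l_{g\circ f}-l_{g\circ f'}|\,dP$ and $\mathcal C_{l_{\mathcal G}}(\varepsilon,\mathcal F)=\sup_{P\in\mathcal P_{l_{\mathcal G\circ\mathcal F}}}\mathcal N(\varepsilon,\mathcal F,d_{[P,l_{\mathcal G}]})$; here applied with $U=X_{i-1}$, $V=X_i$, $\mathcal F=\mathcal H_i$, $\mathcal G=\mathcal G_i$. *)

From HB Require Import structures.
From mathcomp Require Import all_boot all_order all_algebra.
From mathcomp Require Import all_classical all_reals all_analysis.
From Stdlib Require Lists.List.
Set Implicit Arguments. Unset Strict Implicit. Unset Printing Implicit Defensive.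
Import Order.TTheory GRing.Theory Num.Theory.
Import numFieldNormedType.Exports.
Local Open Scope classical_set_scope.
Local Open Scope ring_scope.

(* A type T made pointed by a chosen element p (the point plays no role:
   it is only needed because MathComp-Analysis measurable types are pointed). *)
Definition ptd {T : Type} (p : T) : Type := T.
HB.instance Definition _ (T : Type) (p : T) := gen_eqMixin (ptd p).
HB.instance Definition _ (T : Type) (p : T) := gen_choiceMixin (ptd p).
HB.instance Definition _ (T : Type) (p : T) := isPointed.Build (ptd p) p.

Section Defs.
Variable R : realType.

Definition lossf {W A Y : Type} (l : Y -> A -> R) (h : W -> A) : W * Y -> R :=
  fun wy => l wy.2 (h wy.1).

Definition lossc {W A Y : Type} (l : Y -> A -> R) (K : set (W -> A))
  : set (W * Y -> R) := [set lossf l h | h in K].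

Definition compc {U V A : Type} (G : set (V -> A)) (F : set (U -> V))
  : set (U -> A) := [set h | exists g f, G g /\ F f /\ h = g \o f].

Definition sigma_gen {W : Type} (K : set (W -> R)) : set (set W) :=
  [set B | exists k (c r : R), K k /\ B = k @^-1` ball c r].

Definition sigK {W : Type} (p : W) (K : set (W -> R)) :=
  g_sigma_algebraType (@sigma_gen (ptd p) K).

Definition dP {W : Type} (p : W) (K : set (W -> R))
  (P : probability (sigK p K) R) (k k' : W -> R) : \bar R :=
  (\int[P]_(x in [set: sigK p K]) (`|k x - k' x|)%:E)%E.

(* N(eps, S, rho): minimal size of an eps-cover of S (cover points taken in S,
   closed balls rho(s,t) <= eps); +oo if no finite cover exists. *)
Definition cover_num {T : Type} (eps : R) (S : set T) (rho : T -> T -> \bar R)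
  : \bar R :=
  ereal_inf [set (size C)%:R%:E | C in
    [set C : seq T | (forall t, List.In t C -> S t) /\
        (forall s, S s -> exists t, List.In t C /\ (rho s t <= eps%:E)%E)]].

(* C(eps, K) = sup_{P in P_K} N(eps, K, d_P)  (a sup of nonnegative quantities;
   sup of the empty family, when W is empty, taken to be 0). *)
Definition capC {W : Type} (eps : R) (K : set (W -> R)) : \bar R :=
  ereal_sup ([set x | exists (p : W) (P : probability (sigK p K) R),
                 x = cover_num eps K (@dP W p K P)] `|` [set 0%E]).

Definition dPG {U V A Y : Type} (l : Y -> A -> R) (G : set (V -> A))
  (F : set (U -> V)) (p : U * Y)
  (P : probability (sigK p (lossc l (compc G F))) R) (f f' : U -> V) : \bar R :=
  ereal_sup [set dP P (lossf l (g \o f)) (lossf l (g \o f')) | g in G].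

Definition capCG {U V A Y : Type} (l : Y -> A -> R) (G : set (V -> A))
  (eps : R) (F : set (U -> V)) : \bar R :=
  ereal_sup ([set x | exists (p : U * Y)
                 (P : probability (sigK p (lossc l (compc G F))) R),
                 x = cover_num eps F (dPG P)] `|` [set 0%E]).

End Defs.

(* comp_to X H q i f  <->  f is in  H_(q-1) o ... o H_i  (maps X i -> X q);
   comp_to X H q q = {id}.  Here H i is a family of maps X i -> X (i+1). *)
Inductive comp_to (X : nat -> Type) (H : forall i, set (X i -> X i.+1)) (q : nat)
  : forall i : nat, (X i -> X q) -> Prop :=
| comp_to_id : @comp_to X H q q (fun x => x)
| comp_to_step i (h : X i -> X i.+1) (g : X i.+1 -> X q) :
    H i h -> @comp_to X H q i.+1 g -> @comp_to X H q i (g \o h).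

From HB Require Import structures.
From mathcomp Require Import all_boot all_order all_algebra.
From mathcomp Require Import all_classical all_reals all_analysis.
From mathcomp Require Import ring.
From mathcomp Require Import measurable_realfun lebesgue_measure lebesgue_integral.
Import numFieldNormedType.Exports.
Import Order.TTheory GRing.Theory Num.Theory.
Set Implicit Arguments. Unset Strict Implicit. Unset Printing Implicit Defensive.
Local Open Scope classical_set_scope.
Local Open Scope ring_scope.

(** Two layers at a time.  Let [f_1, ..., f_m] be an e1-cover of F for
    d_[P, l_G] and, for each i, let [g_i1, g_i2, ...] be such that the l_(g_ij)
    form an e2-cover of l_G for the image Q_i of P under (u, y) |-> (f_i u, y);
    Q_i is a measure on sigma_(l_G) because this map pulls the generators of
    sigma_(l_G) back to generators of sigma_(l_(G o F)).  Since d_(Q_i)(l_g, l_g') = d_P(l_(g o f_i), l_(g' o f_i)), the triangle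
    inequality for d_P makes the l_(g_ij o f_i) an (e1 + e2)-cover of
    l_(G o F) for d_P, so that
    C(e1 + e2, l_(G o F)) <= C_(l_G)(e1, F) * C(e2, l_G).
    Peeling off H_1, H_2, ... in turn gives the product bound. *)

Section SigmaK.
Variables (R : realType) (W : Type) (p : W) (K : set (W -> R)).

Lemma measurable_fun_sigK k : K k -> measurable_fun [set: sigK p K] (k : sigK p K -> R).
Proof.
move=> Kk.
apply: (@measurability _ _ _ _ _ _ (@measurable_realfun.RGenOpens.G R)).
  exact: measurable_realfun.RGenOpens.measurableE.
move=> _ [_ [x [y ->]] <-]; rewrite setTI.
have -> : `]x, y[%classic = ball ((x + y) / 2 : R) ((y - x) / 2) :> set R.
  have lE : (x + y) / 2 - (y - x) / 2 = x by field.
  have rE : (x + y) / 2 + (y - x) / 2 = y by field.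
  by rewrite ball_itv lE rE.
by apply: sub_sigma_algebra; exists k, ((x + y) / 2), ((y - x) / 2).
Qed.

Lemma measurable_fun_sigK_dist k k' : K k -> K k' ->
  measurable_fun [set: sigK p K] (fun x : sigK p K => @EFin R `|k x - k' x|).
Proof.
move=> Kk Kk'; apply/measurable_EFinP; apply: measurableT_comp => //.
by apply: measurable_funB; exact: measurable_fun_sigK.
Qed.

Lemma dP_triangle (P : probability (sigK p K) R) k1 k2 k3 :
  K k1 -> K k2 -> K k3 -> (dP P k1 k3 <= dP P k1 k2 + dP P k2 k3)%E.
Proof.
move=> K1 K2 K3; rewrite /dP -ge0_integralD //;
  try exact: measurable_fun_sigK_dist; try by move=> x _; rewrite lee_fin.
apply: ge0_le_integral => //; first exact: measurable_fun_sigK_dist.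
  by apply: emeasurable_funD; exact: measurable_fun_sigK_dist.
by move=> x _; rewrite -EFinD lee_fin ler_distD.
Qed.

End SigmaK.

Lemma capC_ge0 (R : realType) (W : Type) (eps : R) (K : set (W -> R)) :
  (0 <= capC eps K)%E.
Proof. by apply: ereal_sup_ubound; right. Qed.

Lemma capCG_ge0 (R : realType) (U V A Y : Type) (l : Y -> A -> R)
  (G : set (V -> A)) (eps : R) (F : set (U -> V)) : (0 <= capCG l G eps F)%E.
Proof. by apply: ereal_sup_ubound; right. Qed.

Section ImageMeasure.
Variables (R : realType) (U V A Y : Type) (l : Y -> A -> R).
Variables (F : set (U -> V)) (G : set (V -> A)) (pt : U * Y).

Local Notation sigFG := (sigK pt (lossc l (compc G F))).
Local Notation sigG f := (sigK (f pt.1, pt.2) (lossc l G)).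

Definition map_fst (f : U -> V) (x : U * Y) : V * Y := (f x.1, x.2).

Lemma lossc_compc g f : G g -> F f -> lossc l (compc G F) (lossf l (g \o f)).
Proof. by move=> Gg Ff; exists (g \o f) => //; exists g, f. Qed.

Lemma measurable_map_fst f : F f -> measurable_fun [set: sigFG] (map_fst f : sigFG -> sigG f).
Proof.
move=> Ff; apply: measurability => //.
move=> _ [_ [_ [c [r [[g Gg <-] ->]]]] <-]; rewrite setTI.
by apply: sub_sigma_algebra; exists (lossf l (g \o f)), c, r; split => //; exact: lossc_compc.
Qed.

Definition map_fst_mfun f (Ff : F f) : {mfun sigFG >-> sigG f} :=
  HB.pack (map_fst f : sigFG -> sigG f)
    (isMeasurableFun.Build _ _ _ _ _ (measurable_map_fst Ff)).

Definition image_prob (P : probability sigFG R) f (Ff : F f) : probability (sigG f) R :=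
  distribution P (map_fst_mfun Ff).

Lemma dP_image_prob P f (Ff : F f) g g' : G g -> G g' ->
  dP (image_prob P Ff) (lossf l g) (lossf l g') =
  dP P (lossf l (g \o f)) (lossf l (g' \o f)).
Proof.
move=> Gg Gg'; rewrite /dP /image_prob /distribution ge0_integral_pushforward //.
by apply: measurable_fun_sigK_dist; [exists g|exists g'].
Qed.

End ImageMeasure.

Section Covers.
Variables (R : realType) (T : Type).
Implicit Types (eps : R) (S : set T) (rho : T -> T -> \bar R) (C : seq T).

Definition is_cover eps S rho C :=
  (forall t, List.In t C -> S t) /\
  (forall s, S s -> exists t, List.In t C /\ (rho s t <= eps%:E)%E).

Lemma cover_num_le_size eps S rho C :
  is_cover eps S rho C -> (cover_num eps S rho <= (size C)%:R%:E)%E.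
Proof. by move=> cC; apply: ereal_inf_lbound; exists C. Qed.

Lemma cover_num_ge1 eps S rho : (exists s, S s) -> (1 <= cover_num eps S rho)%E.
Proof.
move=> [s Ss]; apply: le_ereal_inf_tmp => _ [C [_ /(_ s Ss) [t [Ct _]]] <-].
by case: C Ct => // ? ? _; rewrite lee_fin ler1n.
Qed.

Lemma cover_num_attained eps S rho : (cover_num eps S rho < +oo)%E ->
  exists C, is_cover eps S rho C /\ cover_num eps S rho = (size C)%:R%:E.
Proof.
move=> fin; have [C0 cC0] : exists C, is_cover eps S rho C.
  apply: contrapT => noC; move: fin; rewrite /cover_num.
  suff -> : [set (size C)%:R%:E | C in is_cover eps S rho] = set0 :> set (\bar R).
    by rewrite ereal_inf0.
  by apply/seteqP; split => // t [C cC _]; apply: noC; exists C.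
have exP : exists n, `[< exists C, is_cover eps S rho C /\ size C = n >].
  by exists (size C0); apply/asboolP; exists C0.
case: (ex_minnP exP) => m /asboolP [C [cC eCm]] minC; exists C; split => //.
apply/eqP; rewrite eq_le cover_num_le_size //=.
apply: le_ereal_inf_tmp => _ [C' cC' <-]; rewrite lee_fin ler_nat.
by rewrite eCm; apply: minC; apply/asboolP; exists C'.
Qed.

End Covers.

Lemma is_cover_image (R : realType) (S T : Type) (f : S -> T) (eps : R) (D : set S)
    (rho : T -> T -> \bar R) (rho' : S -> S -> \bar R) (C : seq T) :
  (forall s s', D s -> D s' -> rho (f s) (f s') = rho' s s') ->
  is_cover eps (f @` D) rho C -> exists Cs, size Cs = size C /\ is_cover eps D rho' Cs.
Proof.
move=> rhoE [CfD Ccov].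
have [Cs [eC CsD]] : exists Cs, map f Cs = C /\ forall s, List.In s Cs -> D s.
  elim: C CfD {Ccov} => [|t C IH] CfD; first by exists [::].
  have [s Ds <-] := CfD t (or_introl erefl).
  have [Cs [<- CsD]] := IH (fun t' Ct' => CfD t' (or_intror Ct')).
  by exists (s :: Cs); split => // s' [<-|/CsD].
exists Cs; split; first by rewrite -eC size_map.
split => // s Ds; have [t [Ct le_eps]] := Ccov (f s) (ex_intro2 _ _ s Ds erefl).
move: Ct; rewrite -eC => /List.in_map_iff [s' [ft Css']].
by exists s'; split => //; rewrite -rhoE ?ft //; exact: CsD.
Qed.

Lemma In_allpairs_dep (S T U : Type) (f : S -> T -> U) (s : seq S) (t : S -> seq T) z :
  List.In z [seq f x y | x <- s, y <- t x] <->
  exists x y, [/\ List.In x s, List.In y (t x) & z = f x y].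
Proof.
elim: s => [|x s IH] /=; first by split => [//|[? [? []]]].
rewrite List.in_app_iff IH List.in_map_iff; split.
- by case=> [[y [<- ty]]|[x' [y [? ? ->]]]]; [exists x, y | exists x', y]; split; auto.
- move=> [x' [y [[<-|sx'] ty ->]]]; [left; exists y | right; exists x', y]; by split.
Qed.

Lemma natr_sumn_le (R : numDomainType) (S : Type) (n : S -> nat) (s : seq S) (k : R) :
  (forall x, List.In x s -> (n x)%:R <= k) -> (sumn [seq n x | x <- s])%:R <= (size s)%:R * k.
Proof.
elim: s => [|x s IH] le_k /=; first by rewrite mul0r.
rewrite natrD mulrSr mulrDl mul1r addrC.
by apply: lerD; [apply: IH => y sy; apply: le_k; right | apply: le_k; left].
Qed.

Section TwoLayers.
Variables (R : realType) (U V A Y : Type) (l : Y -> A -> R).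
Variables (F : set (U -> V)) (G : set (V -> A)).

Section FixedMeasure.
Variables (pt : U * Y) (P : probability (sigK pt (lossc l (compc G F))) R).

Let dP_at (f : U -> V) (g g' : V -> A) := dP P (lossf l (g \o f)) (lossf l (g' \o f)).

Lemma dP_le_dPG f f' g : G g -> (dP P (lossf l (g \o f)) (lossf l (g \o f')) <= dPG P f f')%E.
Proof. by move=> Gg; apply: ereal_sup_ubound; exists g. Qed.

Lemma is_cover_compc e1 e2 C1 (Lf : (U -> V) -> seq (V -> A)) :
  is_cover e1 F (dPG P) C1 -> (forall f, F f -> is_cover e2 G (dP_at f) (Lf f)) ->
  is_cover (e1 + e2) (lossc l (compc G F)) (dP P) [seq lossf l (g \o f) | f <- C1, g <- Lf f].
Proof.
move=> [C1F C1cov] cLf; split.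
  move=> _ /In_allpairs_dep [f [g [C1f Lfg ->]]]; have Ff := C1F f C1f.
  by apply: lossc_compc => //; exact: (cLf f Ff).1.
move=> _ [_ [g [f' [Gg [Ff' ->]]]] <-].
have [f [C1f df]] := C1cov f' Ff'; have Ff := C1F f C1f.
have [LfG Lfcov] := cLf f Ff; have [g' [Lfg' dg]] := Lfcov g Gg.
exists (lossf l (g' \o f)); split; first by apply/In_allpairs_dep; exists f, g'.
apply: le_trans (dP_triangle P (lossc_compc l Gg Ff') (lossc_compc l Gg Ff)
  (lossc_compc l (LfG g' Lfg') Ff)) _.
by rewrite EFinD leeD // (le_trans _ df) // dP_le_dPG.
Qed.

Lemma cover_num_le_capCG e : (cover_num e F (dPG P) <= capCG l G e F)%E.
Proof. by apply: ereal_sup_ubound; left; exists pt, P. Qed.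

Lemma cover_num_image_le_capC e f (Ff : F f) :
  (cover_num e (lossc l G) (dP (image_prob P Ff)) <= capC e (lossc l G))%E.
Proof. by apply: ereal_sup_ubound; left; exists (f pt.1, pt.2), (image_prob P Ff). Qed.

Lemma ex_cover_dP_at e f : F f -> (capC e (lossc l G) < +oo)%E ->
  exists Lf, is_cover e G (dP_at f) Lf /\ ((size Lf)%:R%:E <= capC e (lossc l G))%E.
Proof.
move=> Ff fin.
have [C [cC eC]] := cover_num_attained (le_lt_trans (cover_num_image_le_capC e Ff) fin).
have [Lf [sLf cLf]] := is_cover_image (rho' := dP_at f) (dP_image_prob P Ff) cC.
by exists Lf; split => //; rewrite sLf -eC; exact: cover_num_image_le_capC.
Qed.

Lemma cover_num_compc_le e1 e2 :
  (cover_num (e1 + e2) (lossc l (compc G F)) (dP P) <= capCG l G e1 F * capC e2 (lossc l G))%E.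
Proof.
have [[[f0 Ff0] [g0 Gg0]]|noFG] := pselect ((exists f, F f) /\ (exists g, G g)); last first.
  apply: le_trans (mule_ge0 (capCG_ge0 _ _ _ _) (capC_ge0 _ _)).
  apply: (@cover_num_le_size _ _ _ _ _ [::]); split => // s [_ [g [f [Gg [Ff _]]]] _].
  by case: noFG; split; [exists f|exists g].
have CG1 : (1 <= capCG l G e1 F)%E.
  by apply: le_trans (cover_num_le_capCG e1); apply: cover_num_ge1; exists f0.
have CC1 : (1 <= capC e2 (lossc l G))%E.
  apply: le_trans (cover_num_image_le_capC e2 Ff0).
  by apply: cover_num_ge1; exists (lossf l g0), g0.
have [CGfin|] := ltP (capCG l G e1 F) +oo%E; last first.
  by rewrite leye_eq => /eqP ->; rewrite gt0_mulye ?leey // (lt_le_trans lte01).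
have [Cfin|] := ltP (capC e2 (lossc l G)) +oo%E; last first.
  by rewrite leye_eq => /eqP ->; rewrite gt0_muley ?leey // (lt_le_trans lte01).
have [C1 [cC1 eC1]] := cover_num_attained (le_lt_trans (cover_num_le_capCG e1) CGfin).
have /choice [Lf cLf] : forall f, exists L, F f ->
    is_cover e2 G (dP_at f) L /\ ((size L)%:R%:E <= capC e2 (lossc l G))%E.
  move=> f; have [Ff|nFf] := pselect (F f); last by exists [::].
  by have [L cL] := ex_cover_dP_at Ff Cfin; exists L.
apply: le_trans (cover_num_le_size (is_cover_compc cC1 (fun f Ff => (cLf f Ff).1))) _.
have kE : ((fine (capC e2 (lossc l G)))%:E = capC e2 (lossc l G))%E.
  by rewrite fineK // ge0_fin_numE ?capC_ge0.
rewrite size_allpairs_dep -kE.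
apply: (@le_trans _ _ ((size C1)%:R * fine (capC e2 (lossc l G)))%:E).
  rewrite lee_fin; apply: natr_sumn_le => f C1f.
  by rewrite -lee_fin kE; exact: (cLf f (cC1.1 f C1f)).2.
rewrite EFinM -eC1; apply: lee_wpmul2r; last exact: cover_num_le_capCG.
by rewrite kE (le_trans lee01).
Qed.

End FixedMeasure.

Lemma capC_compc_le e1 e2 :
  (capC (e1 + e2) (lossc l (compc G F)) <= capCG l G e1 F * capC e2 (lossc l G))%E.
Proof.
apply: ge_ereal_sup => _ [[pt [P ->]]|->]; first exact: cover_num_compc_le.
by rewrite mule_ge0 ?capCG_ge0 ?capC_ge0.
Qed.

End TwoLayers.

Section Layers.
Variables (X : nat -> Type) (H : forall i, set (X i -> X i.+1)).
Arguments H : clear implicits.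

Lemma comp_to_leq q i g : @comp_to X H q i g -> (i <= q)%N.
Proof. by elim=> // j h g' _ _ /ltnW. Qed.

Lemma comp_toS q i : (i < q)%N -> @comp_to X H q i = compc (@comp_to X H q i.+1) (H i).
Proof.
move=> iq; apply/funext => g; apply/propext; split; last first.
  by move=> [g' [h [Hg' [Hh ->]]]]; apply: comp_to_step.
by move=> c; case: c iq => [|j h g' Hh Hg'] iq; [rewrite ltnn in iq | exists g', h].
Qed.

Lemma comp_to_refl q (g : X q -> X q) : @comp_to X H q q g -> g = id.
Proof.
suff gen i (h : X i -> X q) : @comp_to X H q i h ->
    forall e : i = q, eq_rect i (fun j => X j -> X q) h q e = id.
  by move/gen/(_ erefl).
case=> [|j h' g' _ /comp_to_leq lt_jq] e; first by rewrite (eq_irrelevance e erefl).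
by rewrite e ltnn in lt_jq.
Qed.

Lemma comp_to_last q : @comp_to X H q.+1 q = H q.
Proof.
rewrite comp_toS //; apply/funext => h; apply/propext; split.
  by move=> [g [h' [/comp_to_refl -> [Hh' ->]]]].
by move=> Hh; exists id, h; split; [exact: comp_to_id|].
Qed.

Lemma capC_comp_to_le (R : realType) (Y : Type) p (l : Y -> X p.+1 -> R) (eps : nat -> R) i :
  (i <= p)%N ->
  (capC (\sum_(i <= j < p.+1) eps j) (lossc l (@comp_to X H p.+1 i))
   <= capC (eps p) (lossc l (H p)) *
      \prod_(i <= j < p) capCG l (@comp_to X H p.+1 j.+1) (eps j) (H j))%E.
Proof.
move=> /subnK; move: (p - i)%N => n; elim: n i => [|n IH] i.
  by rewrite add0n => ->; rewrite big_nat1 big_geq // mule1 comp_to_last.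
move=> ip; have lt_ip : (i < p)%N by rewrite -ip addSn ltnS leq_addl.
rewrite big_ltn 1?ltnW // comp_toS 1?ltnW //.
apply: le_trans (capC_compc_le _ _ _ _ _) _.
rewrite [X in (_ <= _ * X)%E]big_ltn // muleCA.
by apply: lee_wpmul2l; [exact: capCG_ge0 | apply: IH; rewrite addnS -addSn].
Qed.

End Layers.

Unset Implicit Arguments.

Theorem lemmaC12 (R : realType) (X : nat -> Type) (Y : Type) (p : nat)
  (H : forall i : nat, set (X i -> X i.+1))
  (M : R) (l : Y -> X p.+1 -> R) (hl : forall y a, 0 <= l y a <= M)
  (eps : nat -> R) (heps : forall j : nat, (j <= p)%N -> 0 < eps j) :
  (capC (\sum_(j < p.+1) eps j) (lossc l (fun h => @comp_to X H p.+1 0 h))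
   <= capC (eps p) (lossc l (H p)) *
      \prod_(j < p) capCG l (fun g => @comp_to X H p.+1 j.+1 g) (eps j) (H j))%E.
Proof.
by have := capC_comp_to_le H l eps (leq0n p); rewrite !big_mkord.
Qed.
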